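(* Let $r\in\mathbb{N}_0$. In a network with a total of $N$ rank-$K$ maxout units, the number of $r$-partial activation patterns satisfies $|\mathcal P_r|\le\binom{rK}{2r}\binom{N}{r}K^{N-r}$, and the number of $r$-partial activation sub-patterns satisfies $|\mathcal S_r|\le\binom{rK}{2r}\binom{N}{r}$.
   Context: An activation pattern of a network with $N$ rank-$K$ maxout units (indexed by $z\in[N]$) is an assignment of a nonempty set $J_z\subseteq[K]$ to each unit; it is $r$-partial if $\sum_{z\in[N]}(|J_z|-1)=r$. $\mathcal P_r$ is the set of $r$-partial activation patterns. An activation sub-pattern is obtained from a pattern by disregarding all $J_z$ with $|J_z|=1$, i.e. it is a list $(J_z)_{z\in Z}$, $Z\subseteq[N]$, with $|J_z|\ge2$; $\mathcal S_r$ is the set of sub-patterns with $\sum_{z\in Z}(|J_z|-1)=r$.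
   Formalization: Both bounds, on $|\mathcal P_r|$ and on $|\mathcal S_r|$, hold for r ≤ N only, that is, when r does not exceed the total number N of maxout units. The statement above fails without it. *)

From mathcomp Require Import all_boot.
Set Implicit Arguments. Unset Strict Implicit. Unset Printing Implicit Defensive.

(* Units are indexed by 'I_N, maxout ranks by 'I_K.  An activation pattern
   assigns to each unit z a nonempty set J_z of arg-max indices. *)
Definition activation_pattern (N K : nat) := {ffun 'I_N -> {set 'I_K}}.

Definition partial_patterns (N K r : nat) : {set {ffun 'I_N -> {set 'I_K}}} :=
  [set J : {ffun 'I_N -> {set 'I_K}} |
     [forall z, J z != set0] && (\sum_(z < N) (#|J z| - 1) == r)].

(* An activation sub-pattern (J_z)_{z in Z}, Z a subset of [N], |J_z| >= 2,
   is encoded as a partial function: J z = Some J_z for z in Z, None otherwise. *)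
Definition opt_excess (K : nat) (o : option {set 'I_K}) : nat :=
  if o is Some A then #|A| - 1 else 0.

Definition partial_subpatterns (N K r : nat)
  : {set {ffun 'I_N -> option {set 'I_K}}} :=
  [set J : {ffun 'I_N -> option {set 'I_K}} |
     [forall z, if J z is Some A then 2 <= #|A| else true]
     && (\sum_(z < N) opt_excess (J z) == r)].

From mathcomp Require Import all_boot.
Set Implicit Arguments. Unset Strict Implicit. Unset Printing Implicit Defensive.

(* Every unit z with |J_z| >= 2 contributes at least 1 to the excess r, so
   the units carrying the excess fit into some r-element set W of units
   ([N choose r] choices).  Over W, the sets J_z have total size
   r + r = 2r, so the set {(z, a) | z in W, a in J_z} is a 2r-subset of
   W x [K], which has rK elements; it determines J on W.  Outside W a
   pattern is a choice of one index per unit (K^(N-r) choices), and a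
   sub-pattern is undefined there. *)

Lemma card_bigcup_le (I T : finType) (P : pred I) (F : I -> {set T}) :
  #|\bigcup_(i | P i) F i| <= \sum_(i | P i) #|F i|.
Proof.
apply: (big_ind2 (fun (S : {set T}) n => #|S| <= n)) => //
  [|S m S' n le_Sm le_S'n].
  by rewrite cards0.
exact: leq_trans (leq_card_setU S S') (leq_add le_Sm le_S'n).
Qed.

Lemma card_support_le_sum (I : finType) (f : I -> nat) :
  #|[set i | f i != 0]| <= \sum_i f i.
Proof.
rewrite -sum1_card big_mkcond /=; apply: leq_sum => i _.
by rewrite inE; case: (f i).
Qed.

Lemma exists_card_superset (T : finType) (Z : {set T}) k :
  #|Z| <= k -> k <= #|T| -> exists2 W : {set T}, Z \subset W & #|W| = k.
Proof.
move=> le_Zk; rewrite -(subnK le_Zk); elim: (k - #|Z|) => [|d IHd] le_kT.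
  by exists Z.
have [W sub_ZW card_W] := IHd (ltnW le_kT).
have : 0 < #|~: W| by rewrite -(ltn_add2l #|W|) addn0 cardsC card_W -addSn.
rewrite card_gt0 => /set0Pn [x]; rewrite inE => xNW.
exists (x |: W); first exact: subset_trans sub_ZW (subsetUr _ _).
by rewrite cardsU1 xNW card_W.
Qed.

Lemma card_le_bin_mul_fibre (I T : finType) (w : T -> nat)
    (X : {set {ffun I -> T}}) r c :
  r <= #|I| -> {in X, forall J : {ffun I -> T}, \sum_i w (J i) = r} ->
  (forall W : {set I}, #|W| = r ->
     #|[set J in X | [forall i in ~: W, w (J i) == 0]]| <= c) ->
  #|X| <= 'C(#|I|, r) * c.
Proof.
move=> le_rI sumX le_fibre.
pose fibre W := [set J in X | [forall i in ~: W, w (J i) == 0]].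
have sub_X : X \subset \bigcup_(W in [set W : {set I} | #|W| == r]) fibre W.
  apply/subsetP => J XJ.
  have [|W sub_supp card_W] :=
    @exists_card_superset _ [set i | w (J i) != 0] r _ le_rI.
    by rewrite -(sumX J XJ) card_support_le_sum.
  apply/bigcupP; exists W; first by rewrite inE card_W.
  rewrite inE XJ; apply/forall_inP => i; rewrite inE; apply: contraNT => wJi.
  by apply: (subsetP sub_supp); rewrite inE.
rewrite (leq_trans (subset_leq_card sub_X)) // (leq_trans (card_bigcup_le _ _)) //.
rewrite -card_draws -sum_nat_const; apply: leq_sum => W; rewrite inE => /eqP.
exact: le_fibre.
Qed.

Section GraphCode.

Variables I A : finType.

Definition graph_on (W : {set I}) (E : I -> {set A}) : {set I * A} :=
  [set p | (p.1 \in W) && (p.2 \in E p.1)].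

Lemma graph_on_subset W E : graph_on W E \subset setX W [set: A].
Proof. by apply/subsetP => p; rewrite !inE => /andP[-> _]. Qed.

Lemma card_graph_on W E : #|graph_on W E| = \sum_(i in W) #|E i|.
Proof.
rewrite -sum1_card.
under [RHS]eq_bigr => i _ do rewrite -sum1_card.
by rewrite pair_big_dep /=; apply: eq_bigl => p; rewrite inE.
Qed.

Lemma graph_on_inj W E1 E2 : graph_on W E1 = graph_on W E2 -> {in W, E1 =1 E2}.
Proof.
move=> eq_graph i iW; apply/setP => a.
by have := congr1 (fun G : {set I * A} => (i, a) \in G) eq_graph; rewrite /= !inE iW.
Qed.

Lemma card_le_graph_code (T U : finType) (X : {set T}) (H : {pred U})
    (h : T -> U) (E : T -> I -> {set A}) (W : {set I}) m :
  {in X, forall x, h x \in H} ->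
  {in X, forall x, \sum_(i in W) #|E x i| = m} ->
  {in X &, forall x y, h x = h y -> {in W, E x =1 E y} -> x = y} ->
  #|X| <= #|H| * 'C(#|W| * #|A|, m).
Proof.
move=> hX sumE code_inj.
pose code x := (h x, graph_on W (E x)).
have /card_in_imset <- : {in X &, injective code}.
  by move=> x y Xx Xy [eq_h /graph_on_inj]; apply: code_inj.
rewrite -(cardsE H) -(cardsT A) -cardsX -cards_draws -cardsX.
apply: subset_leq_card; apply/subsetP => _ /imsetP[x Xx ->].
by rewrite !inE hX //= graph_on_subset card_graph_on sumE ?eqxx.
Qed.

End GraphCode.

Lemma card_singletons (T : finType) : #|[set A : {set T} | #|A| == 1]| = #|T|.
Proof. by rewrite card_draws bin1. Qed.

(* On the units of W where a sub-pattern is [None], its graph uses the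
   filler [ord0_set K]: a singleton when K > 0 (the filler is empty for K = 0,
   hence [partial_subpattern_K_gt0]), and [trim_small] decodes it back to
   [None] because genuine entries have size >= 2. *)
Definition ord0_set n : {set 'I_n} := [set a | val a == 0].

Lemma card_ord0_set n : #|ord0_set n| = (0 < n).
Proof.
case: n => [|n]; first by apply: eq_card0 => -[].
by rewrite (_ : ord0_set _ = [set ord0]) ?cards1 //; apply/setP => a; rewrite !inE.
Qed.

Definition trim_small n (A : {set 'I_n}) : option {set 'I_n} :=
  if 1 < #|A| then Some A else None.

Lemma trim_small_odflt n (o : option {set 'I_n}) :
  (if o is Some A then 2 <= #|A| else true) -> trim_small (odflt (ord0_set n) o) = o.
Proof.
rewrite /trim_small; case: o => [A /= -> //|_] /=.
by rewrite card_ord0_set; case: (0 < n).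
Qed.

Section Patterns.

Variables N K r : nat.

Lemma partial_pattern_card_gt0 J z :
  J \in partial_patterns N K r -> 0 < #|J z|.
Proof. by rewrite inE card_gt0 => /andP[/forallP]. Qed.

Lemma card_pattern_fibre (W : {set 'I_N}) : #|W| = r ->
  #|[set J in partial_patterns N K r | [forall z in ~: W, #|J z| - 1 == 0]]|
    <= K ^ (N - r) * 'C(r * K, 2 * r).
Proof.
move=> card_W.
pose H := pffun_on set0 (~: W) [set A : {set 'I_K} | #|A| == 1].
pose outside (J : activation_pattern N K) : activation_pattern N K :=
  [ffun z => if z \in W then set0 else J z].
have card_H : #|H| = K ^ (N - r).
  rewrite card_pffun_on card_singletons card_ord.
  have := cardsC W; rewrite card_W card_ord => eq_N.
  by rewrite -[in RHS]eq_N addKn.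
have := card_le_graph_code (H := H) (h := outside) (E := id)
  (W := W) (m := 2 * r).
rewrite card_H card_W card_ord; apply.
- move=> J /setIdP[PJ /forall_inP singl]; apply/pffun_onP; split.
    by apply/subsetP => z; rewrite !inE ffunE; case: (z \in W); rewrite ?eqxx.
  move=> _ /imageP[z zNW ->]; move: (singl z zNW) (partial_pattern_card_gt0 z PJ).
  by rewrite inE in zNW; rewrite ffunE (negbTE zNW) inE subn_eq0 eqn_leq => ->.
- move=> J /setIdP[PJ /forall_inP singl].
  move: (PJ); rewrite inE => /andP[_ /eqP sumJ].
  have sum_W : \sum_(z in W) (#|J z| - 1) = r.
    rewrite -sumJ; apply: big_rmcond => z zNW; apply/eqP/singl; by rewrite inE.
  rewrite mul2n -addnn -{1}sum_W -{1}card_W -sum1_card -big_split /=.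
  by apply: eq_bigr => z _; rewrite addn1 subn1 prednK // partial_pattern_card_gt0.
- move=> J1 J2 _ _ eq_out eq_in; apply/ffunP => z.
  case: (boolP (z \in W)) => [/eq_in //|zNW].
  have := congr1 (fun f : activation_pattern N K => f z) eq_out.
  by rewrite !ffunE (negbTE zNW).
Qed.

Lemma partial_subpattern_K_gt0 J :
  J \in partial_subpatterns N K r -> 0 < r -> 0 < K.
Proof.
rewrite inE => /andP[_ /eqP <-]; apply: contraTT; rewrite -eqn0Ngt => /eqP K0.
rewrite big1 // => z _; case: (J z) => //= A; apply/eqP.
by rewrite subn_eq0 (leq_trans (max_card A)) // card_ord K0.
Qed.

Lemma partial_subpattern_valid J z : J \in partial_subpatterns N K r ->
  if J z is Some A then 2 <= #|A| else true.
Proof. by rewrite inE => /andP[/forallP]. Qed.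

Lemma partial_subpattern_excess_eq0 J z : J \in partial_subpatterns N K r ->
  opt_excess (J z) == 0 -> J z = None.
Proof.
move/(partial_subpattern_valid z); case: (J z) => //= A le2A.
by rewrite subn_eq0 => /(leq_trans le2A).
Qed.

Lemma card_subpattern_fibre (W : {set 'I_N}) : #|W| = r ->
  #|[set J in partial_subpatterns N K r | [forall z in ~: W, opt_excess (J z) == 0]]|
    <= 'C(r * K, 2 * r).
Proof.
move=> card_W.
pose fill (J : {ffun 'I_N -> option {set 'I_K}}) z := odflt (ord0_set K) (J z).
have := card_le_graph_code (H := [set: unit]) (h := fun=> tt) (E := fill)
  (W := W) (m := 2 * r).
rewrite cardsT card_unit mul1n card_W card_ord; apply.
- by move=> J _; rewrite inE.
- move=> J /setIdP[SJ /forall_inP none_out].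
  move: (SJ); rewrite inE => /andP[_ /eqP sumJ].
  have sum_W : \sum_(z in W) opt_excess (J z) = r.
    rewrite -sumJ; apply: big_rmcond => z zNW; apply/eqP/none_out; by rewrite inE.
  rewrite mul2n -addnn -{1}sum_W -{1}card_W -sum1_card -big_split /=.
  apply: eq_bigr => z zW; rewrite /fill; move: (partial_subpattern_valid z SJ).
  case: (J z) => [A le2A|_] /=; first by rewrite addn1 subn1 prednK // ltnW.
  rewrite card_ord0_set (partial_subpattern_K_gt0 SJ) //.
  by rewrite -card_W card_gt0; apply/set0Pn; exists z.
- move=> J1 J2 /setIdP[S1 /forall_inP out1] /setIdP[S2 /forall_inP out2] _ eq_in.
  apply/ffunP => z; case: (boolP (z \in W)) => [zW | zNW].
    rewrite -(trim_small_odflt (partial_subpattern_valid z S1)).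
    rewrite -(trim_small_odflt (partial_subpattern_valid z S2)).
    by have := eq_in z zW; rewrite /fill => ->.
  have zNW' : z \in ~: W by rewrite inE.
  by rewrite (partial_subpattern_excess_eq0 S1 (out1 z zNW'))
             (partial_subpattern_excess_eq0 S2 (out2 z zNW')).
Qed.

Lemma card_partial_patterns : r <= N ->
  #|partial_patterns N K r| <= 'C(N, r) * (K ^ (N - r) * 'C(r * K, 2 * r)).
Proof.
move=> le_rN; rewrite -[N in 'C(N, _)](card_ord N).
apply: (card_le_bin_mul_fibre (w := fun A : {set 'I_K} => #|A| - 1)).
- by rewrite card_ord.
- by move=> J; rewrite inE => /andP[_ /eqP].
- exact: card_pattern_fibre.
Qed.

Lemma card_partial_subpatterns : r <= N ->
  #|partial_subpatterns N K r| <= 'C(N, r) * 'C(r * K, 2 * r).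
Proof.
move=> le_rN; rewrite -[N in 'C(N, _)](card_ord N).
apply: (card_le_bin_mul_fibre (w := @opt_excess K)).
- by rewrite card_ord.
- by move=> J; rewrite inE => /andP[_ /eqP].
- exact: card_subpattern_fibre.
Qed.

End Patterns.

Theorem lemma3 (N K r : nat) (hrN : r <= N) :
  #|partial_patterns N K r| <= 'C(r * K, 2 * r) * 'C(N, r) * K ^ (N - r)
  /\ #|partial_subpatterns N K r| <= 'C(r * K, 2 * r) * 'C(N, r).
Proof.
split.
- by rewrite -mulnA mulnCA [_ * K ^ _]mulnC; apply: card_partial_patterns.
- by rewrite mulnC; apply: card_partial_subpatterns.
Qed.
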